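(* Let $R$ be a ring and $n\in\{0,1,2,\dots\}\cup\{\infty\}$. Let $(h_1,h_2,h_3)$ be a morphism of distinguished triangles in the homotopy category $\boldsymbol{K}(R)$ from $X_1^\bullet\to X_2^\bullet\to X_3^\bullet\to X_1^\bullet[1]$ to $Y_1^\bullet\to Y_2^\bullet\to Y_3^\bullet\to Y_1^\bullet[1]$, where $h_k:X_k^\bullet\to Y_k^\bullet$. If $h_1$ and $h_2$ are $n$-quasi-isomorphisms, then $h_3$ is an $n$-quasi-isomorphism.
   Context: $R$ is an associative ring with identity; modules are left $R$-modules; $\infty+1=\infty$. For a positive integer $k$, $\mathcal{P}^{<k}$ is the class of modules $M$ admitting an exact sequence $0\to P_j\to\cdots\to P_0\to M\to 0$ with $j\le k-1$ and every $P_i$ finitely generated projective; $\mathcal{P}^{<\infty}$ is the class of modules admitting such a sequence for some finite $j$. A complex $Z^\bullet$ is $n$-exact if $\mathrm{Hom}_R(P,Z^\bullet)$ is exact for every $P\in\mathcal{P}^{<n+1}$. A cochain map $f$ is an $n$-quasi-isomorphism if its mapping cone is $n$-exact. *)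

From HB Require Import structures.
From mathcomp Require Import all_boot all_order all_algebra.
Set Implicit Arguments. Unset Strict Implicit. Unset Printing Implicit Defensive.
Import Order.TTheory GRing.Theory Num.Theory.
Local Open Scope ring_scope.

Section Defs.
Variable R : pzRingType.

Definition islin (A B : lmodType R) (f : A -> B) : Prop :=
  forall (a : R) (x y : A), f (a *: x + y) = a *: f x + f y.

Lemma islin0 {A B : lmodType R} {f : A -> B} : islin f -> f 0 = 0.
Proof.
move=> lf; have := lf 1 0 0; rewrite !scale1r addr0.
by move/(congr1 (fun v => v - f 0)); rewrite subrr addrK => h; rewrite -h.
Qed.

Lemma islinD {A B : lmodType R} {f : A -> B} {x y} : islin f -> f (x + y) = f x + f y.
Proof. by move=> lf; have := lf 1 x y; rewrite !scale1r. Qed.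

Lemma islinN {A B : lmodType R} {f : A -> B} {x} : islin f -> f (- x) = - f x.
Proof.
move=> lf; have := lf (-1) x 0; rewrite !addr0 (islin0 lf) addr0.
by rewrite !scaleN1r.
Qed.

Unset Implicit Arguments.
Record cx := Cx {
  cobj :> int -> lmodType R;
  cd : forall i : int, cobj i -> cobj (i + 1);
  cd_lin : forall i : int, islin (cd i);
  cd_dd : forall i x, cd (i + 1) (cd i x) = 0 }.

Record cmap (X Y : cx) := CMap {
  cm :> forall i, X i -> Y i;
  cm_lin : forall i : int, islin (cm i);
  cm_comm : forall i x, cm (i + 1) (cd X i x) = cd Y i (cm i x) }.

Set Implicit Arguments.
Arguments cm {X Y}.
Arguments cm_lin {X Y}.
Arguments cm_comm {X Y}.

Definition homotopic (X Y : cx) (f g : forall i, X i -> Y i) : Prop :=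
  exists s : forall i, X (i + 1) -> Y i,
    (forall i : int, islin (s i)) /\
    forall i (x : X (i + 1)),
      f (i + 1) x - g (i + 1) x = cd Y i (s i x) + s (i + 1) (cd X (i + 1) x).

Definition cmcomp (X Y Z : cx) (g : cmap Y Z) (f : cmap X Y) :
  forall i, X i -> Z i := fun i x => g i (f i x).

(* isomorphism in K(R): homotopy equivalence *)
Definition htpy_equiv (X Y : cx) (a : cmap X Y) : Prop :=
  exists b : cmap Y X,
    homotopic (cmcomp b a) (fun i x => x) /\ homotopic (cmcomp a b) (fun i x => x).

Definition shift_d (X : cx) (i : int) (x : X (i + 1)) : X (i + 1 + 1) :=
  - cd X (i + 1) x.

Lemma shift_lin (X : cx) i : islin (@shift_d X i).
Proof. by move=> a x y; rewrite /shift_d cd_lin opprD scalerN. Qed.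

Lemma shift_dd (X : cx) i x : @shift_d X (i + 1) (@shift_d X i x) = 0.
Proof. by rewrite /shift_d (islinN (cd_lin X _)) opprK cd_dd. Qed.

Definition shift (X : cx) : cx :=
  @Cx (fun i => X (i + 1)) (@shift_d X) (@shift_lin X) (@shift_dd X).

Definition shiftm (X Y : cx) (a : cmap X Y) : forall i, shift X i -> shift Y i :=
  fun i => a (i + 1).

Lemma scale_fst (A B : lmodType R) (a : R) (p : (A * B)%type) : (a *: p).1 = a *: p.1.
Proof. by []. Qed.
Lemma scale_snd (A B : lmodType R) (a : R) (p : (A * B)%type) : (a *: p).2 = a *: p.2.
Proof. by []. Qed.
Lemma add_fst (A B : lmodType R) (p q : (A * B)%type) : (p + q).1 = p.1 + q.1.
Proof. by []. Qed.
Lemma add_snd (A B : lmodType R) (p q : (A * B)%type) : (p + q).2 = p.2 + q.2.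
Proof. by []. Qed.

Section Cone.
Variables (X Y : cx) (f : cmap X Y).

Definition cone_obj (i : int) : lmodType R := (cobj X (i + 1) * cobj Y i)%type.

Definition cone_d (i : int) (p : cone_obj i) : cone_obj (i + 1) :=
  (- cd X (i + 1) p.1, f (i + 1) p.1 + cd Y i p.2).

Lemma cone_lin i : islin (@cone_d i).
Proof.
move=> a [x1 y1] [x2 y2]; rewrite /cone_d /=.
congr pair.
  by rewrite (cd_lin X) opprD -scalerN.
rewrite (cm_lin f) (cd_lin Y).
transitivity (a *: (f (i + 1) x1 + cd Y i y1) + (f (i + 1) x2 + cd Y i y2)); last by [].
rewrite scalerDr.
by rewrite -!addrA; congr (_ + _); rewrite [RHS]addrCA.
Qed.

Lemma cone_dd i p : @cone_d (i + 1) (@cone_d i p) = 0.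
Proof.
case: p => x y; rewrite /cone_d /=.
rewrite (islinN (cd_lin X _)) opprK cd_dd.
rewrite (islinN (cm_lin f _)) cm_comm (islinD (cd_lin Y _)) cd_dd addr0.
by rewrite addNr.
Qed.

Definition cone : cx := @Cx cone_obj cone_d cone_lin cone_dd.

Definition cone_in : forall i, Y i -> cone i := fun i y => (0, y).
Definition cone_out : forall i, cone i -> shift X i := fun i p => p.1.
End Cone.

Record tri := Tri {
  t1 : cx; t2 : cx; t3 : cx;
  tu : cmap t1 t2; tv : cmap t2 t3; tw : cmap t3 (shift t1) }.

(* distinguished triangles of K(R): isomorphic in K(R) to a standard
   cone triangle X -f-> Y -> C(f) -> X[1] *)
Definition distinguished (T : tri) : Prop :=
  exists (X Y : cx) (f : cmap X Y)
         (a : cmap (t1 T) X) (b : cmap (t2 T) Y) (c : cmap (t3 T) (cone f)),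
    [/\ htpy_equiv a, htpy_equiv b & htpy_equiv c] /\
    [/\ homotopic (cmcomp b (tu T)) (cmcomp f a),
        homotopic (cmcomp c (tv T)) (fun i x => cone_in f (b i x)) &
        homotopic (fun i x => shiftm a (tw T i x)) (fun i x => cone_out (c i x))].

Definition tri_morph (T T' : tri) (h1 : cmap (t1 T) (t1 T'))
  (h2 : cmap (t2 T) (t2 T')) (h3 : cmap (t3 T) (t3 T')) : Prop :=
  [/\ homotopic (cmcomp h2 (tu T)) (cmcomp (tu T') h1),
      homotopic (cmcomp h3 (tv T)) (cmcomp (tv T') h2) &
      homotopic (fun i x => shiftm h1 (tw T i x)) (cmcomp (tw T') h3)].

Definition fin_gen (M : lmodType R) : Prop :=
  exists (k : nat) (g : 'I_k -> M),
    forall m : M, exists c : 'I_k -> R, m = \sum_(i < k) c i *: g i.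

Definition projective (P : lmodType R) : Prop :=
  forall (A B : lmodType R) (p : A -> B) (f : P -> B),
    islin p -> islin f -> (forall b, exists a, p a = b) ->
    exists g : P -> A, islin g /\ forall x, p (g x) = f x.

Definition fgp_resolution (j : nat) (M : lmodType R) : Prop :=
  exists (P : nat -> lmodType R) (dP : forall i : nat, P i.+1 -> P i) (eps : P 0%N -> M),
    [/\ (forall i, islin (dP i)), islin eps,
        (forall i, fin_gen (P i) /\ projective (P i)),
        (forall i, (j < i)%N -> forall x : P i, x = 0) &
        [/\ (forall m, exists x, eps x = m),
            (forall x, eps (dP 0%N x) = 0),
            (forall x, eps x = 0 -> exists y, dP 0%N y = x),
            (forall i x, dP i (dP i.+1 x) = 0) &
            (forall i x, dP i x = 0 -> exists y, dP i.+1 y = x)]].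

(* k : option nat, None = infinity.  P^{<k} *)
Definition Pless (k : option nat) (M : lmodType R) : Prop :=
  exists j : nat, match k with Some k => (j <= k.-1)%N | None => True end
                  /\ fgp_resolution j M.

Definition hom_exact (P : lmodType R) (Z : cx) : Prop :=
  forall (i : int) (phi : P -> Z (i + 1)), islin phi ->
    (forall x, cd Z (i + 1) (phi x) = 0) ->
    exists psi : P -> Z i, islin psi /\ forall x, cd Z i (psi x) = phi x.

(* n : option nat, None = infinity; infinity + 1 = infinity *)
Definition n_exact (n : option nat) (Z : cx) : Prop :=
  forall P : lmodType R, Pless (omap S n) P -> hom_exact P Z.

Definition n_qiso (n : option nat) (X Y : cx) (f : cmap X Y) : Prop :=
  n_exact n (cone f).

End Defs.

Arguments cmap {R} X Y.
Arguments cm {R X Y}.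
Arguments cm_lin {R X Y}.
Arguments cm_comm {R X Y}.
Arguments cd {R}.

(* For a fixed module P, a chain map f induces an isomorphism on the cohomology
   of Hom_R(P, -) exactly when Hom_R(P, cone f) is exact: this is the long exact
   sequence of the cone triangle.  Hom_R(P, -) turns every distinguished triangle
   into a long exact cohomology sequence, because cone triangles have this
   property and it is invariant under isomorphism in K(R).  The two four lemmas,
   applied to the ladders of a morphism of triangles, then show that h3 is a
   cohomology isomorphism when h1 and h2 are.  No property of P is used, so the
   argument works for each P in P^{<n+1} separately. *)

From mathcomp Require Import all_boot all_order all_algebra.
Set Implicit Arguments. Unset Strict Implicit. Unset Printing Implicit Defensive.
Import GRing.Theory.
Local Open Scope ring_scope.

Section LinearMaps.
Variable R : pzRingType.
Implicit Types A B C : lmodType R.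

Lemma islin_comp A B C (g : B -> C) (f : A -> B) : islin g -> islin f -> islin (g \o f).
Proof. by move=> lg lf a x y; rewrite /= lf lg. Qed.

Lemma islin_cst0 A B : islin (fun _ : A => 0 : B).
Proof. by move=> a x y; rewrite scaler0 addr0. Qed.

Lemma islin_add A B (f g : A -> B) : islin f -> islin g -> islin (fun x => f x + g x).
Proof. by move=> lf lg a x y; rewrite lf lg scalerDr addrACA. Qed.

Lemma islin_opp A B (f : A -> B) : islin f -> islin (fun x => - f x).
Proof. by move=> lf a x y; rewrite lf opprD scalerN. Qed.

Lemma islin_sub A B (f g : A -> B) : islin f -> islin g -> islin (fun x => f x - g x).
Proof. by move=> lf lg; apply: islin_add => //; apply: islin_opp. Qed.

Lemma islin_pair A B C (f : A -> B) (g : A -> C) :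
  islin f -> islin g -> islin (fun x => (f x, g x)).
Proof. by move=> lf lg a x y; rewrite lf lg. Qed.

Lemma islin_fst A B C (f : A -> B * C) : islin f -> islin (fun x => (f x).1).
Proof. by move=> lf a x y; rewrite lf. Qed.

Lemma islin_snd A B C (f : A -> B * C) : islin f -> islin (fun x => (f x).2).
Proof. by move=> lf a x y; rewrite lf. Qed.

Lemma islinB A B (f : A -> B) x y : islin f -> f (x - y) = f x - f y.
Proof. by move=> lf; rewrite (islinD lf) (islinN lf). Qed.

End LinearMaps.

Section TriangleMaps.
Variable R : pzRingType.

Lemma homotopic_shift (X Y : cx R) (f g : forall i, X i -> Y i) :
  homotopic f g ->
  homotopic (X := shift X) (Y := shift Y) (fun i => f (i + 1)) (fun i => g (i + 1)).
Proof.
case=> s [ls hs]; exists (fun i x => - s (i + 1) x); split=> [i | i x].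
  exact: islin_opp (ls _).
by rewrite /= /shift_d hs (islinN (cd_lin _ Y _)) (islinN (ls _)) !opprK.
Qed.

Section ShiftMap.
Variables (X Y : cx R) (f : cmap X Y).

Lemma shiftm_comm i (x : shift X i) :
  shiftm f (cd (shift X) i x) = cd (shift Y) i (shiftm f x).
Proof. by rewrite /shiftm /= /shift_d (islinN (cm_lin f _)) cm_comm. Qed.

Definition shift_map : cmap (shift X) (shift Y) :=
  {| cm := shiftm f; cm_lin := fun i => cm_lin f (i + 1); cm_comm := shiftm_comm |}.
End ShiftMap.

Section ConeMaps.
Variables (X Y : cx R) (f : cmap X Y).

Lemma cone_in_lin i : islin (@cone_in _ _ _ f i).
Proof. by move=> a x y; rewrite -[RHS]/(a *: 0 + 0, a *: x + y) scaler0 addr0. Qed.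

Lemma cone_in_comm i (y : Y i) : cone_in f (cd Y i y) = cd (cone f) i (cone_in f y).
Proof.
by rewrite /cone_in /= /cone_d /= (islin0 (cd_lin _ _ _)) (islin0 (cm_lin f _)) oppr0 add0r.
Qed.

Definition cone_incl : cmap Y (cone f) :=
  {| cm := cone_in f; cm_lin := cone_in_lin; cm_comm := cone_in_comm |}.

Definition cone_proj : cmap (cone f) (shift X) :=
  {| cm := @cone_out _ _ _ f; cm_lin := fun i a x y => erefl;
     cm_comm := fun i x => erefl |}.
End ConeMaps.

End TriangleMaps.

Section HomCohomology.
Variables (R : pzRingType) (P : lmodType R).

(* Cochains of Hom_R(P, X) of degree i + 1 are linear maps P -> X (i + 1); indexing
   by i avoids casts between X (i + 1) and X i.  The prefix H_ refers to the
   cohomology of Hom_R(P, -). *)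
Definition cocycle (X : cx R) i (phi : P -> X (i + 1)) : Prop :=
  islin phi /\ forall x, cd X (i + 1) (phi x) = 0.

Definition coboundary (X : cx R) i (phi : P -> X (i + 1)) : Prop :=
  exists psi : P -> X i, islin psi /\ forall x, cd X i (psi x) = phi x.

Definition cohomologous (X : cx R) i (phi psi : P -> X (i + 1)) : Prop :=
  coboundary (fun x => phi x - psi x).

Lemma hom_exactP (Z : cx R) :
  hom_exact P Z <-> forall i (phi : P -> Z (i + 1)), cocycle phi -> coboundary phi.
Proof. by split=> hZ i phi; [case; apply: hZ | move=> lp cp; apply: hZ]. Qed.

Section Classes.
Variables (X : cx R) (i : int).
Implicit Types phi psi chi : P -> X (i + 1).

Lemma coboundary_ext phi psi : phi =1 psi -> coboundary phi -> coboundary psi.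
Proof. by move=> e [s [ls hs]]; exists s; split=> // x; rewrite hs e. Qed.

Lemma coboundary0 : @coboundary X i (fun _ => 0).
Proof.
by exists (fun _ => 0); split=> [|x]; [exact: islin_cst0 | exact: islin0 (cd_lin _ X i)].
Qed.

Lemma coboundaryD phi psi :
  coboundary phi -> coboundary psi -> coboundary (fun x => phi x + psi x).
Proof.
move=> [s [ls hs]] [t [lt ht]]; exists (fun x => s x + t x); split.
  exact: islin_add.
by move=> x; rewrite (islinD (cd_lin _ X i)) hs ht.
Qed.

Lemma coboundaryN phi : coboundary phi -> coboundary (fun x => - phi x).
Proof.
move=> [s [ls hs]]; exists (fun x => - s x); split; first exact: islin_opp.
by move=> x; rewrite (islinN (cd_lin _ X i)) hs.
Qed.

Lemma cocycleD phi psi : cocycle phi -> cocycle psi -> cocycle (fun x => phi x + psi x).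
Proof.
move=> [l1 c1] [l2 c2]; split; first exact: islin_add.
by move=> x; rewrite (islinD (cd_lin _ X _)) c1 c2 addr0.
Qed.

Lemma cocycleB phi psi : cocycle phi -> cocycle psi -> cocycle (fun x => phi x - psi x).
Proof.
move=> [l1 c1] [l2 c2]; split; first exact: islin_sub.
by move=> x; rewrite (islinB _ _ (cd_lin _ X _)) c1 c2 subr0.
Qed.

Lemma cohomologous_refl phi : cohomologous phi phi.
Proof. by apply: coboundary_ext coboundary0 => x; rewrite subrr. Qed.

Lemma cohomologous_sym phi psi : cohomologous phi psi -> cohomologous psi phi.
Proof. by move/coboundaryN; apply: coboundary_ext => x; rewrite opprB. Qed.

Lemma cohomologous_trans phi chi psi :
  cohomologous phi chi -> cohomologous chi psi -> cohomologous phi psi.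
Proof.
by move=> e1 e2; apply: coboundary_ext (coboundaryD e1 e2) => x; rewrite addrA subrK.
Qed.

Lemma cohomologous_coboundary phi psi :
  cohomologous phi psi -> coboundary psi -> coboundary phi.
Proof. by move=> e b; apply: coboundary_ext (coboundaryD e b) => x; rewrite subrK. Qed.

End Classes.

Section ChainMapAction.
Variables (X Y : cx R) (f : cmap X Y) (i : int).
Implicit Types phi psi : P -> X (i + 1).

Lemma cmap_cocycle phi : cocycle phi -> cocycle (f _ \o phi).
Proof.
case=> lp cp; split; first exact: islin_comp (cm_lin f _) lp.
by move=> x; rewrite /= -cm_comm cp (islin0 (cm_lin f _)).
Qed.

Lemma cmap_coboundary phi : coboundary phi -> coboundary (f _ \o phi).
Proof.
case=> s [ls hs]; exists (f _ \o s); split; first exact: islin_comp (cm_lin f _) ls.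
by move=> x; rewrite /= -cm_comm hs.
Qed.

Lemma cmap_cohomologous phi psi :
  cohomologous phi psi -> cohomologous (f _ \o phi) (f _ \o psi).
Proof.
by move/cmap_coboundary; apply: coboundary_ext => x; rewrite /= (islinB _ _ (cm_lin f _)).
Qed.

End ChainMapAction.

Lemma homotopic_cohomologous (X Y : cx R) (f g : forall i, X i -> Y i) i
    (phi : P -> X (i + 1)) :
  homotopic f g -> cocycle phi -> cohomologous (f _ \o phi) (g _ \o phi).
Proof.
move=> [s [ls hs]] [lp cp]; exists (s i \o phi); split; first exact: islin_comp.
by move=> x; rewrite /= hs cp (islin0 (ls _)) addr0.
Qed.

Section Shift.
Variables (X : cx R) (i : int) (phi : P -> X (i + 1 + 1)).

Lemma cocycle_shift : @cocycle (shift X) i phi <-> @cocycle X (i + 1) phi.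
Proof.
split=> -[lp cp]; split=> // x; last by rewrite /= /shift_d cp oppr0.
by apply/eqP; rewrite -oppr_eq0; apply/eqP; exact: cp.
Qed.

Lemma coboundary_shift : @coboundary (shift X) i phi <-> @coboundary X (i + 1) phi.
Proof.
split=> -[s [ls hs]]; exists (fun x => - s x); split=> [|x]; try exact: islin_opp.
  by rewrite (islinN (cd_lin _ X _)); exact: hs.
by rewrite /= /shift_d (islinN (cd_lin _ X _)) opprK.
Qed.

End Shift.

Definition H_injective (X Y : cx R) (f : cmap X Y) i : Prop :=
  forall phi : P -> X (i + 1), cocycle phi -> coboundary (f _ \o phi) -> coboundary phi.

Definition H_surjective (X Y : cx R) (f : cmap X Y) i : Prop :=
  forall psi : P -> Y (i + 1), cocycle psi ->
    exists2 phi, cocycle phi & cohomologous psi (f _ \o phi).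

Definition H_iso (X Y : cx R) (f : cmap X Y) : Prop :=
  forall i, H_injective f i /\ H_surjective f i.

Section CohomologyMaps.
Variables (X Y : cx R) (f : cmap X Y).

Lemma H_injective_shift i : H_injective (shift_map f) i <-> H_injective f (i + 1).
Proof.
split=> fI phi /cocycle_shift zp /coboundary_shift bp; apply/coboundary_shift; exact: fI.
Qed.

Lemma H_iso_shift : H_iso f -> H_iso (shift_map f).
Proof.
move=> fH i; split; first by apply/H_injective_shift; case: (fH (i + 1)).
move=> psi /cocycle_shift zp; have [_ /(_ psi zp) [phi zphi e]] := fH (i + 1).
by exists phi; [exact/cocycle_shift | exact/coboundary_shift].
Qed.

Lemma H_injective_cohomologous i (phi psi : P -> X (i + 1)) :
  H_injective f i -> cocycle phi -> cocycle psi ->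
  cohomologous (f _ \o phi) (f _ \o psi) -> cohomologous phi psi.
Proof.
move=> fI zp zq e; apply: fI; first exact: cocycleB.
by apply: coboundary_ext e => x; rewrite /= (islinB _ _ (cm_lin f _)).
Qed.

End CohomologyMaps.

Lemma htpy_equiv_H_iso (X Y : cx R) (f : cmap X Y) : htpy_equiv f -> H_iso f.
Proof.
case=> g [gf fg] i; split=> [phi zp bp | psi zp].
  exact: cohomologous_coboundary (cohomologous_sym (homotopic_cohomologous gf zp))
                                 (cmap_coboundary g bp).
exists (g _ \o psi); first exact: cmap_cocycle.
exact: cohomologous_sym (homotopic_cohomologous fg zp).
Qed.

Section Exactness.
Variables (X Y Z : cx R) (f : cmap X Y) (g : cmap Y Z).

Definition H_im_sub_ker : Prop :=
  forall i (phi : P -> X (i + 1)), cocycle phi -> coboundary (g _ \o f _ \o phi).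

Definition H_ker_sub_im : Prop :=
  forall i (psi : P -> Y (i + 1)), cocycle psi -> coboundary (g _ \o psi) ->
    exists2 phi, cocycle phi & cohomologous psi (f _ \o phi).

Definition H_exact : Prop := H_im_sub_ker /\ H_ker_sub_im.

End Exactness.

Section ExactTransport.
Variables (X Y Z X' Y' Z' : cx R).
Variables (f : cmap X Y) (g : cmap Y Z) (f' : cmap X' Y') (g' : cmap Y' Z').
Variables (a : cmap X X') (b : cmap Y Y') (c : cmap Z Z').
Hypotheses (aH : H_iso a) (bH : H_iso b) (cH : H_iso c).
Hypotheses (fa : homotopic (cmcomp b f) (cmcomp f' a))
           (gb : homotopic (cmcomp c g) (cmcomp g' b)).

Lemma H_im_sub_ker_transport : H_im_sub_ker f' g' -> H_im_sub_ker f g.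
Proof.
move=> fg' i phi zphi; have zf := cmap_cocycle f zphi.
have [cI _] := cH i; apply: cI; first exact: cmap_cocycle.
apply: cohomologous_coboundary (fg' i _ (cmap_cocycle a zphi)).
apply: cohomologous_trans (homotopic_cohomologous gb zf) _.
exact: cmap_cohomologous (homotopic_cohomologous fa zphi).
Qed.

Lemma H_ker_sub_im_transport : H_ker_sub_im f' g' -> H_ker_sub_im f g.
Proof.
move=> fg' i psi zpsi bg; have [[_ aS] [bI _]] := (aH i, bH i).
have bg' : coboundary (g' _ \o b _ \o psi).
  apply: cohomologous_coboundary (cmap_coboundary c bg).
  exact: cohomologous_sym (homotopic_cohomologous gb zpsi).
have [phi' zphi' e'] := fg' i _ (cmap_cocycle b zpsi) bg'.
have [phi zphi e] := aS phi' zphi'.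
exists phi => //; apply: H_injective_cohomologous bI zpsi (cmap_cocycle f zphi) _.
apply: cohomologous_trans e' (cohomologous_trans (cmap_cohomologous f' e) _).
exact: cohomologous_sym (homotopic_cohomologous fa zphi).
Qed.

Lemma H_exact_transport : H_exact f' g' -> H_exact f g.
Proof.
by case=> ik ki; split; [exact: H_im_sub_ker_transport | exact: H_ker_sub_im_transport].
Qed.

End ExactTransport.

Section ConeExact.
Variables (X Y : cx R) (f : cmap X Y).

Lemma cone_cocycleP i (h : P -> cone f (i + 1)) :
  cocycle h <-> [/\ islin h, forall x, cd X (i + 1 + 1) (h x).1 = 0
                   & forall x, f _ (h x).1 + cd Y (i + 1) (h x).2 = 0].
Proof.
split=> [[lh ch] | [lh c1 c2]].
  split=> // x; have := ch x; rewrite /= /cone_d => /(congr1 fst) /= /eqP.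
    by rewrite oppr_eq0 => /eqP.
  by move/(_ x): ch; rewrite /= /cone_d => /(congr1 snd).
by split=> // x; rewrite /= /cone_d c1 c2 oppr0.
Qed.

Lemma H_exact_cone_incl : H_exact f (cone_incl f).
Proof.
split=> [i phi [lp cp] | i psi zpsi [s [ls hs]]].
  exists (fun x => (phi x, 0)); split; first by apply: islin_pair => //; exact: islin_cst0.
  by move=> x; rewrite /= /cone_d /= cp (islin0 (cd_lin _ Y _)) oppr0 addr0.
have hs1 x : cd X (i + 1) (s x).1 = 0.
  by apply/eqP; rewrite -oppr_eq0; have /(congr1 fst) /= -> := hs x.
have hs2 x : f _ (s x).1 + cd Y i (s x).2 = psi x by have /(congr1 snd) := hs x.
exists (fun x => (s x).1); first by split=> //; exact: islin_fst.
exists (fun x => (s x).2); split; first exact: islin_snd.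
by move=> x; rewrite /= -hs2 (addrC (f _ _)) addrK.
Qed.

Lemma H_exact_cone_proj : H_exact (cone_incl f) (cone_proj f).
Proof.
split=> [i psi _ | i h /cone_cocycleP [lh c1 c2] [s [ls hs]]]; first exact: coboundary0.
have hs' x : - cd X (i + 1) (s x) = (h x).1 := hs x.
exists (fun x => (h x).2 - f _ (s x)).
  split=> [|x]; first exact: islin_sub (islin_snd lh) (islin_comp (cm_lin f _) ls).
  rewrite (islinB _ _ (cd_lin _ Y _)) -cm_comm -(islinN (cm_lin f _)) hs'.
  by rewrite (addrC (cd _ _ _)) c2.
exists (fun x => (s x, 0)); split; first by apply: islin_pair => //; exact: islin_cst0.
move=> x; rewrite /= /cone_d /= hs' (islin0 (cd_lin _ Y _)) addr0.
by rewrite -[RHS]/((h x).1 - 0, (h x).2 - ((h x).2 - f _ (s x))) subr0 subKr.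
Qed.

Lemma H_exact_cone_shift : H_exact (cone_proj f) (shift_map f).
Proof.
split=> [i h /cone_cocycleP [lh _ c2] | i phi zphi [s [ls hs]]].
  exists (fun x => (h x).2); split=> [|x]; first exact: islin_snd.
  by rewrite /= /shift_d; apply/eqP; rewrite eq_sym -addr_eq0 c2.
have [lp cp] := (cocycle_shift phi).1 zphi.
exists (fun x => (phi x, s x)); last exact: cohomologous_refl.
apply/cone_cocycleP; split=> // [|x]; first exact: islin_pair.
have hs' : - cd Y (i + 1) (s x) = f _ (phi x) := hs x.
by rewrite /= -hs' addNr.
Qed.

End ConeExact.

Lemma hom_exact_cone_H_iso (X Y : cx R) (f : cmap X Y) : hom_exact P (cone f) <-> H_iso f.
Proof.
have [inclC inclE] := H_exact_cone_incl f.
have [_ projE] := H_exact_cone_proj f.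
have [shiftC shiftE] := H_exact_cone_shift f.
split=> [/hom_exactP exC i | fH]; last apply/hom_exactP => i h zh.
  split=> [|psi zpsi]; last exact: inclE zpsi (exC _ _ (cmap_cocycle (cone_incl f) zpsi)).
  rewrite -(subrK 1 i); apply/H_injective_shift => phi zphi bphi.
  have [h zh e] := shiftE _ phi zphi bphi.
  exact: cohomologous_coboundary e (cmap_coboundary _ (exC _ _ zh)).
have [[_ fS] [/H_injective_shift fI _]] := (fH i, fH (i + 1)).
have [psi zpsi e] := projE i h zh (fI _ (cmap_cocycle _ zh) (shiftC i h zh)).
have [phi zphi e'] := fS psi zpsi.
apply: cohomologous_coboundary (cohomologous_trans e (cmap_cohomologous _ e')) _.
exact: inclC.
Qed.

Definition tri_H_exact (T : tri R) : Prop :=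
  [/\ H_exact (tu T) (tv T), H_exact (tv T) (tw T) & H_exact (tw T) (shift_map (tu T))].

Lemma distinguished_H_exact T : distinguished T -> tri_H_exact T.
Proof.
case=> X [Y [f [a [b [c [[ea eb ec] [hu hv hw]]]]]]].
have [aH bH cH] := And3 (htpy_equiv_H_iso ea) (htpy_equiv_H_iso eb) (htpy_equiv_H_iso ec).
split.
- exact (H_exact_transport (g' := cone_incl f) aH bH cH hu hv (H_exact_cone_incl f)).
- exact (H_exact_transport (f' := cone_incl f) (g' := cone_proj f)
    bH cH (H_iso_shift aH) hv hw (H_exact_cone_proj f)).
- exact (H_exact_transport (g := shift_map (tu T)) (f' := cone_proj f) (g' := shift_map f)
    cH (H_iso_shift aH) (H_iso_shift bH) hw (homotopic_shift hu) (H_exact_cone_shift f)).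
Qed.

Section FourLemma.
Variables (A B C D A' B' C' D' : cx R).
Variables (u : cmap A B) (v : cmap B C) (w : cmap C D).
Variables (u' : cmap A' B') (v' : cmap B' C') (w' : cmap C' D').
Variables (a : cmap A A') (b : cmap B B') (c : cmap C C') (d : cmap D D').
Hypotheses (ua : homotopic (cmcomp b u) (cmcomp u' a))
           (vb : homotopic (cmcomp c v) (cmcomp v' b))
           (wc : homotopic (cmcomp d w) (cmcomp w' c)).
Variable i : int.

Lemma four_lemma_inj : H_im_sub_ker u v -> H_ker_sub_im v w -> H_ker_sub_im u' v' ->
  H_surjective a i -> H_injective b i -> H_injective d i -> H_injective c i.
Proof.
move=> uvC vwE uvE' aS bI dI g zg bcg.
have bwg : coboundary (w _ \o g).
  apply: dI (cmap_cocycle w zg) _.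
  exact: cohomologous_coboundary (homotopic_cohomologous wc zg) (cmap_coboundary w' bcg).
have [p zp gp] := vwE i g zg bwg.
have bvbp : coboundary (v' _ \o b _ \o p).
  apply: cohomologous_coboundary bcg.
  apply: cohomologous_trans (cohomologous_sym (homotopic_cohomologous vb zp)) _.
  exact (cmap_cohomologous c (cohomologous_sym gp)).
have [q' zq' bpq'] := uvE' i _ (cmap_cocycle b zp) bvbp.
have [q zq q'q] := aS q' zq'.
have puq : cohomologous p (u _ \o q).
  apply: H_injective_cohomologous bI zp (cmap_cocycle u zq) _.
  apply: cohomologous_trans bpq' (cohomologous_trans (cmap_cohomologous u' q'q) _).
  exact: cohomologous_sym (homotopic_cohomologous ua zq).
apply: cohomologous_coboundary (cohomologous_trans gp (cmap_cohomologous v puq)) _.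
exact: uvC.
Qed.

Lemma four_lemma_surj : H_ker_sub_im v w -> H_ker_sub_im u' v' -> H_im_sub_ker v' w' ->
  H_surjective a i -> H_surjective c i -> H_injective d i -> H_surjective b i.
Proof.
move=> vwE uvE' vwC' aS cS dI p' zp'.
have [g zg e] := cS _ (cmap_cocycle v' zp').
have bwg : coboundary (w _ \o g).
  apply: dI (cmap_cocycle w zg) _.
  apply: cohomologous_coboundary (homotopic_cohomologous wc zg) _.
  apply: cohomologous_coboundary (cmap_cohomologous w' (cohomologous_sym e)) _.
  exact: vwC'.
have [p zp gp] := vwE i g zg bwg.
pose r x := p' x - b _ (p x).
have zr : cocycle r := cocycleB zp' (cmap_cocycle b zp).
have bvr : coboundary (v' _ \o r).
  have : cohomologous (v' _ \o p') (v' _ \o b _ \o p).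
    apply: cohomologous_trans e (cohomologous_trans (cmap_cohomologous c gp) _).
    exact: homotopic_cohomologous vb zp.
  by apply: coboundary_ext => x; rewrite /= /r (islinB _ _ (cm_lin v' _)).
have [q' zq' rq'] := uvE' i r zr bvr.
have [q zq q'q] := aS q' zq'.
exists (fun x => p x + u _ (q x)); first exact: cocycleD zp (cmap_cocycle u zq).
have : cohomologous r (b _ \o u _ \o q).
  apply: cohomologous_trans rq' (cohomologous_trans (cmap_cohomologous u' q'q) _).
  exact: cohomologous_sym (homotopic_cohomologous ua zq).
by apply: coboundary_ext => x; rewrite /= /r (islinD (cm_lin b _)) opprD addrA.
Qed.

End FourLemma.

Lemma H_iso_tri_morph (T T' : tri R) (h1 : cmap (t1 T) (t1 T'))
    (h2 : cmap (t2 T) (t2 T')) (h3 : cmap (t3 T) (t3 T')) :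
  tri_H_exact T -> tri_H_exact T' -> tri_morph h1 h2 h3 ->
  H_iso h1 -> H_iso h2 -> H_iso h3.
Proof.
case=> [[uvC _] [_ vwE] [_ wuE]] [[_ uvE'] [_ vwE'] [wuC' _]] [m1 m2 m3] H1 H2 i.
have [[_ S1] [I2 S2]] := (H1 i, H2 i).
have [[I1s S1s] [I2s _]] := (H_iso_shift H1 i, H_iso_shift H2 i).
split.
  exact: (four_lemma_inj (d := shift_map h1) m1 m2 m3 uvC vwE uvE' S1 I2 I1s).
exact: (four_lemma_surj (c := shift_map h1) (d := shift_map h2) (w := shift_map (tu T))
          (w' := shift_map (tu T')) m2 m3 (homotopic_shift m1) wuE vwE' wuC' S2 S1s I2s).
Qed.

End HomCohomology.

Theorem corollary4p7 (R : pzRingType) (n : option nat) (T T' : tri R)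
  (h1 : cmap (t1 T) (t1 T')) (h2 : cmap (t2 T) (t2 T')) (h3 : cmap (t3 T) (t3 T')) :
  distinguished T -> distinguished T' -> tri_morph h1 h2 h3 ->
  n_qiso n h1 -> n_qiso n h2 -> n_qiso n h3.
Proof.
move=> dT dT' hm q1 q2 P PP; apply/hom_exact_cone_H_iso.
apply: H_iso_tri_morph (distinguished_H_exact P dT) (distinguished_H_exact P dT') hm _ _.
  exact/hom_exact_cone_H_iso/q1.
exact/hom_exact_cone_H_iso/q2.
Qed.
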